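(* For every integer $k>1$ there exists $g\in[\mathbb{F}_2,\mathbb{F}_2]$ such that $g\in G_{k-1}$ with $\varphi_j(g)=0$ for all $j<k$ and $\varphi_k(g)=-1$, and such that $g\in H_j$ with $\psi_j(g)=0$ for all $j\ge1$.
   Context: $\mathbb{F}_2$ is the free group on $x,y$. Let $\tilde K$ be the graph with vertex set $\mathbb{Z}^2$ and oriented edges $x^iy^jX$ from $(i,j)$ to $(i+1,j)$ and $x^iy^jY$ from $(i,j)$ to $(i,j+1)$. A $1$-chain is written $\alpha=P_\alpha(x,y)X+Q_\alpha(x,y)Y$ with $P_\alpha,Q_\alpha$ integer Laurent polynomials (coefficient of $x^iy^j$ in $P_\alpha$ = coefficient of edge $x^iy^jX$, similarly for $Q_\alpha$). For $g\in[\mathbb{F}_2,\mathbb{F}_2]$ written as a word in $x^{\pm1},y^{\pm1}$, the cycle $\alpha_g$ is the $1$-cycle traced by the lattice path from $(0,0)$ in which $x,x^{-1},y,y^{-1}$ move by $(1,0),(-1,0),(0,1),(0,-1)$ along the corresponding edges, each edge counted with sign $+1$ if traversed in its orientation and $-1$ otherwise; its homology class depends only on $g$. Put $f_g(y)=P_{\alpha_g}(1,y)$ and $g_g(x)=Q_{\alpha_g}(x,1)$. Set $G_0=H_0=[\mathbb{F}_2,\mathbb{F}_2]$ and inductively, for $k\ge1$, $\varphi_k(g)=f_g^{(k)}(1)/k!$ for $g\in G_{k-1}$, $\psi_k(g)=g_g^{(k)}(1)/k!$ for $g\in H_{k-1}$, $G_k=\ker\varphi_k$, $H_k=\ker\psi_k$.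 *)

From mathcomp Require Import all_boot all_order all_algebra.
Set Implicit Arguments. Unset Strict Implicit. Unset Printing Implicit Defensive.
Import Order.TTheory GRing.Theory Num.Theory.
Local Open Scope ring_scope.

(* Letters of words in x^{±1}, y^{±1}: Lx = x, LX = x^-1, Ly = y, LY = y^-1. *)
Inductive letter := Lx | LX | Ly | LY.

(* a word w represents an element of F_2; it is reduced iff no letter is
   immediately followed by its inverse.  Reduced words = elements of F_2. *)
Definition inv_pair (a b : letter) : bool :=
  match a, b with
  | Lx, LX | LX, Lx | Ly, LY | LY, Ly => true
  | _, _ => false
  end.

Fixpoint reduced (w : seq letter) : bool :=
  match w with
  | a :: ((b :: _) as w') => ~~ inv_pair a b && reduced w'
  | _ => true
  end.

Definition expx (w : seq letter) : int :=
  \sum_(a <- w) (match a with Lx => 1 | LX => -1 | _ => 0 end).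
Definition expy (w : seq letter) : int :=
  \sum_(a <- w) (match a with Ly => 1 | LY => -1 | _ => 0 end).

(* g in [F_2,F_2]  <=>  g lies in the kernel of the abelianization
   F_2 -> Z^2, i.e. both exponent sums vanish. *)
Definition in_comm (w : seq letter) : Prop := expx w = 0 /\ expy w = 0.

(* An edge of K~ : (is_X_edge, base vertex (i,j)).  The edge (true,(i,j)) is
   x^i y^j X from (i,j) to (i+1,j); (false,(i,j)) is x^i y^j Y. *)
(* The lattice path from p along w, as the list of traversed edges, each with
   its sign (+1 if traversed along its orientation, -1 otherwise). *)
Fixpoint path_edges (p : int * int) (w : seq letter)
  : seq ((bool * (int * int)) * int) :=
  match w with
  | [::] => [::]
  | a :: w' =>
    match a with
    | Lx => ((true, p), 1) :: path_edges (p.1 + 1, p.2) w'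
    | LX => ((true, (p.1 - 1, p.2)), -1) :: path_edges (p.1 - 1, p.2) w'
    | Ly => ((false, p), 1) :: path_edges (p.1, p.2 + 1) w'
    | LY => ((false, (p.1, p.2 - 1)), -1) :: path_edges (p.1, p.2 - 1) w'
    end
  end.

(* The 1-cycle alpha_g: coefficients of P_alpha (X-edges) and Q_alpha (Y-edges). *)
Definition coefP (w : seq letter) (i j : int) : int :=
  \sum_(e <- path_edges (0, 0) w | e.1.1 && (e.1.2 == (i, j))) e.2.
Definition coefQ (w : seq letter) (i j : int) : int :=
  \sum_(e <- path_edges (0, 0) w | ~~ e.1.1 && (e.1.2 == (i, j))) e.2.

(* A one-variable integer Laurent polynomial given as a finite formal sum
   \sum_t c_t z^{n_t}, encoded as the list of pairs (c_t, n_t). *)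
Definition laurent := seq (int * int).

(* falling factorial n (n-1) ... (n-k+1): d^k/dz^k z^n = ff n k * z^(n-k). *)
Definition ff (n : int) (k : nat) : int := \prod_(i < k) (n - (i : nat)%:Z).

Definition taylor1 (f : laurent) (k : nat) : rat :=
  (\sum_(t <- f) (t.1 * ff t.2 k)%:~R) / (k`!)%:R.

(* f_g(y) = P_{alpha_g}(1, y) = \sum_{X-edges x^i y^j X} (sign) y^j *)
Definition f_g (w : seq letter) : laurent :=
  [seq (e.2, e.1.2.2) | e <- path_edges (0, 0) w & e.1.1].
(* g_g(x) = Q_{alpha_g}(x, 1) = \sum_{Y-edges x^i y^j Y} (sign) x^i *)
Definition g_g (w : seq letter) : laurent :=
  [seq (e.2, e.1.2.1) | e <- path_edges (0, 0) w & ~~ e.1.1].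

Definition phi (k : nat) (w : seq letter) : rat := taylor1 (f_g w) k.
Definition psi (k : nat) (w : seq letter) : rat := taylor1 (g_g w) k.

Fixpoint inG (k : nat) (w : seq letter) : Prop :=
  match k with
  | 0 => in_comm w
  | k'.+1 => inG k' w /\ phi k w = 0
  end.
Fixpoint inH (k : nat) (w : seq letter) : Prop :=
  match k with
  | 0 => in_comm w
  | k'.+1 => inH k' w /\ psi k w = 0
  end.

(* Put twist g := x [y, g] x^-1.  Its X-edges are those of g translated by
   (1,1), those of g translated by (1,0) with opposite signs, and a cancelling
   pair, so f_(twist g) = (y - 1) f_g and the Taylor coefficients at 1 move up
   by one: phi_(j+1) (twist g) = phi_j g and phi_0 (twist g) = 0.  Its Y-edges
   come in the same two translated copies, which agree in x, so g_(twist g)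
   vanishes and every psi_j (twist g) is 0.  Starting from [y, x^-1], for which
   f = 1 - y and phi_1 = -1, the (k-1)-fold twist is the required element; it
   stays reduced because every word in the chain starts with x or y and ends
   with x^(+-1). *)

From Pilot Require Import Defs.
From mathcomp Require Import all_boot all_order all_algebra.
From mathcomp Require Import ring.
Import GRing.Theory Num.Theory.
Local Open Scope ring_scope.

Definition inv_letter (a : letter) : letter :=
  match a with Lx => LX | LX => Lx | Ly => LY | LY => Ly end.

Definition inv_word (w : seq letter) : seq letter := rev (map inv_letter w).

Lemma inv_word_cons a s : inv_word (a :: s) = rcons (inv_word s) (inv_letter a).
Proof. by rewrite /inv_word map_cons rev_cons. Qed.

Lemma inv_word_rcons s b : inv_word (rcons s b) = inv_letter b :: inv_word s.
Proof. by rewrite /inv_word map_rcons rev_rcons. Qed.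

Definition twist (g : seq letter) : seq letter :=
  Lx :: Ly :: g ++ LY :: inv_word g ++ [:: LX].

Definition witness (n : nat) : seq letter := iter n twist [:: Ly; LX; LY; Lx].

Lemma witnessS n : witness n.+1 = twist (witness n).
Proof. by []. Qed.

Lemma expx_cons a w :
  expx (a :: w) = (match a with Lx => 1 | LX => -1 | _ => 0 end) + expx w.
Proof. by rewrite /expx big_cons. Qed.

Lemma expy_cons a w :
  expy (a :: w) = (match a with Ly => 1 | LY => -1 | _ => 0 end) + expy w.
Proof. by rewrite /expy big_cons. Qed.

Lemma expx_cat w1 w2 : expx (w1 ++ w2) = expx w1 + expx w2.
Proof. by rewrite /expx big_cat. Qed.

Lemma expy_cat w1 w2 : expy (w1 ++ w2) = expy w1 + expy w2.
Proof. by rewrite /expy big_cat. Qed.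

Lemma expx_inv_word w : expx (inv_word w) = - expx w.
Proof. by rewrite /expx big_rev big_map -sumrN; apply: eq_bigr => -[]. Qed.

Lemma expy_inv_word w : expy (inv_word w) = - expy w.
Proof. by rewrite /expy big_rev big_map -sumrN; apply: eq_bigr => -[]. Qed.

Lemma in_comm_twist g : in_comm (twist g).
Proof.
rewrite /in_comm /twist !(expx_cons, expy_cons, expx_cat, expy_cat).
rewrite expx_inv_word expy_inv_word /expx /expy !big_nil /=.
by split; ring.
Qed.

Lemma in_comm_witness n : in_comm (witness n).
Proof.
case: n => [|n]; last exact: in_comm_twist.
by rewrite /in_comm /= !(expx_cons, expy_cons) /expx /expy !big_nil.
Qed.

(* Unqualified [inv_pair] would be MathComp's [monoid.inv_pair]. *)
Definition joinable (s1 s2 : seq letter) : bool :=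
  if s2 is b :: _ then ~~ Defs.inv_pair (last b s1) b else true.

Lemma reduced_cat s1 s2 :
  reduced (s1 ++ s2) = [&& reduced s1, reduced s2 & joinable s1 s2].
Proof.
elim: s1 => [|a [|c s1] IH].
- by case: s2 => [|b s2] //=; case: b; rewrite andbT.
- by case: s2 {IH} => [|b s2] //=; rewrite andbC.
- rewrite -[reduced (_ ++ _)]/(~~ Defs.inv_pair a c && reduced ((c :: s1) ++ s2)).
  by rewrite IH /= -!andbA.
Qed.

Lemma reduced_rev s : reduced (rev s) = reduced s.
Proof.
elim: s => [|a s IH] //.
rewrite rev_cons -cats1 reduced_cat IH /=.
case: s {IH} => [|b s]; first by case: a.
by rewrite rev_cons last_rcons andbC; case: a; case: b.
Qed.

Lemma reduced_map_inv_letter s : reduced (map inv_letter s) = reduced s.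
Proof.
elim: s => [|a s IH] //.
by case: s IH => [|b s] //= ->; case: a; case: b.
Qed.

Lemma reduced_inv_word s : reduced (inv_word s) = reduced s.
Proof. by rewrite /inv_word reduced_rev reduced_map_inv_letter. Qed.

Definition starts_positive (a : letter) : bool :=
  match a with Lx | Ly => true | _ => false end.

Definition is_x_letter (a : letter) : bool :=
  match a with Lx | LX => true | _ => false end.

(* The side conditions keep the four junctions of [twist g] free of cancellation. *)
Definition admissible (g : seq letter) : bool :=
  if g is a :: s then [&& reduced g, starts_positive a & is_x_letter (last a s)]
  else false.

Lemma admissible_twist g : admissible g -> admissible (twist g).
Proof.
case: g => [|a s] // /and3P[red_g pos_a x_b].
set g := a :: s in red_g *.
have j1 : joinable [:: Lx; Ly] (g ++ [:: LY] ++ inv_word g ++ [:: LX]).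
  by rewrite /g; case: (a) pos_a.
have j2 : joinable g ([:: LY] ++ inv_word g ++ [:: LX]).
  by rewrite /g /=; case: (last a s) x_b.
have j3 : joinable [:: LY] (inv_word g ++ [:: LX]).
  by rewrite /g (lastI a s) inv_word_rcons; case: (last a s) x_b.
have j4 : joinable (inv_word g) [:: LX].
  by rewrite /= /g inv_word_cons last_rcons; case: (a) pos_a.
have red_twist : reduced ([:: Lx; Ly] ++ g ++ [:: LY] ++ inv_word g ++ [:: LX]).
  by rewrite !reduced_cat j1 j2 j3 j4 reduced_inv_word red_g.
by apply/and3P; split; [exact: red_twist | | rewrite /= !(last_cat, last_cons)].
Qed.

Lemma reduced_witness n : reduced (witness n).
Proof.
have: admissible (witness n).
  by elim: n => [|n IH] //; apply: admissible_twist.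
by case: (witness n) => // a s /and3P[].
Qed.

Definition edge : Type := ((bool * (int * int)) * int)%type.

Definition shift_edge (a b : int) (e : edge) : edge :=
  ((e.1.1, (e.1.2.1 + a, e.1.2.2 + b)), e.2).

Definition opp_edge (e : edge) : edge := (e.1, - e.2).

Lemma path_edges_shift (p : int * int) a b w :
  path_edges (p.1 + a, p.2 + b) w = map (shift_edge a b) (path_edges p w).
Proof.
by elim: w p => [|c w IH] [p1 p2] //=; case: c; rewrite /= -IH /shift_edge /= addrAC.
Qed.

Lemma path_edges_cat (p : int * int) w1 w2 :
  path_edges p (w1 ++ w2) =
  path_edges p w1 ++ path_edges (p.1 + expx w1, p.2 + expy w1) w2.
Proof.
elim: w1 p => [|c w IH] [p1 p2] /=; first by rewrite /expx /expy !big_nil !addr0.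
by rewrite expx_cons expy_cons; case: c; rewrite /= IH /= ?addr0 ?add0r !addrA.
Qed.

Lemma path_edges_inv_word (p : int * int) w :
  path_edges (p.1 + expx w, p.2 + expy w) (inv_word w) =
  rev (map opp_edge (path_edges p w)).
Proof.
elim: w p => [|c w IH] [p1 p2] //=.
rewrite expx_cons expy_cons inv_word_cons -cats1 path_edges_cat.
rewrite expx_inv_word expy_inv_word.
case: c => /=; rewrite rev_cons -cats1 -IH /opp_edge /=;
  by congr (path_edges (_, _) _ ++ [:: ((_, (_, _)), _)]); ring.
Qed.

Lemma path_edges_twist g : in_comm g ->
  path_edges (0, 0) (twist g) =
  ((true, (0, 0)), 1) :: ((false, (1, 0)), 1) ::
  map (shift_edge 1 1) (path_edges (0, 0) g) ++
  ((false, (1, 0)), -1) ::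
  rev (map opp_edge (map (shift_edge 1 0) (path_edges (0, 0) g))) ++
  [:: ((true, (0, 0)), -1)].
Proof.
move=> [gx gy].
rewrite /twist /= path_edges_cat gx gy /= path_edges_cat expx_inv_word expy_inv_word gx gy /=.
rewrite -!(path_edges_shift (0, 0)) -(path_edges_inv_word (1, 0)) gx gy /=.
by rewrite !(addr0, add0r, subr0, subrr).
Qed.

Definition mulX (f : laurent) : laurent := [seq (t.1, t.2 + 1) | t <- f].

Definition oppL (f : laurent) : laurent := [seq (- t.1, t.2) | t <- f].

Definition mulXsub1 (f : laurent) : laurent := mulX f ++ oppL f.

Definition derivn_at1 (f : laurent) (k : nat) : int := \sum_(t <- f) t.1 * ff t.2 k.

Lemma taylor1E f k : taylor1 f k = (derivn_at1 f k)%:~R / (k`!)%:R.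
Proof. by rewrite /taylor1 /derivn_at1 rmorph_sum. Qed.

Lemma ff0 n : ff n 0 = 1.
Proof. by rewrite /ff big_ord0. Qed.

Lemma ffS_addr1 n k : ff (n + 1) k.+1 = ff n k.+1 + k.+1%:Z * ff n k.
Proof.
have ffSr : ff n k.+1 = ff n k * (n - k%:Z) by rewrite /ff big_ord_recr.
have ffSl : ff (n + 1) k.+1 = (n + 1) * ff n k.
  rewrite /ff big_ord_recl /= subr0; congr (_ * _).
  by apply: eq_bigr => i _; rewrite /bump leq0n add1n intS; ring.
by rewrite ffSl ffSr intS; ring.
Qed.

Lemma derivn_at1_mulXsub1 f k :
  derivn_at1 (mulXsub1 f) k = if k is j.+1 then j.+1%:Z * derivn_at1 f j else 0.
Proof.
rewrite /derivn_at1 big_cat /= !big_map -big_split /=.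
case: k => [|j]; first by rewrite big1 // => t _; rewrite !ff0; ring.
rewrite mulr_sumr; apply: eq_bigr => t _; rewrite ffS_addr1; ring.
Qed.

Lemma taylor1_mulXsub1 f k : taylor1 (mulXsub1 f) k.+1 = taylor1 f k.
Proof.
rewrite !taylor1E derivn_at1_mulXsub1 factS natrM intrM.
have k1_neq0 : (k.+1%:R : rat) != 0 by rewrite pnatr_eq0.
have fact_neq0 : ((k`!)%:R : rat) != 0 by rewrite pnatr_eq0 -lt0n fact_gt0.
by rewrite -[k.+1%:Z%:~R]/(k.+1%:R) invfM mulrACA divff // mul1r.
Qed.

Lemma derivn_at1_f_g_twist g k : in_comm g ->
  derivn_at1 (f_g (twist g)) k = derivn_at1 (mulXsub1 (f_g g)) k.
Proof.
move=> cg; rewrite /f_g path_edges_twist // /derivn_at1 /mulXsub1 /mulX /oppL.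
rewrite big_cat !big_map !big_filter /= !(big_cons, big_cat, big_rev) /= !big_map /=.
under [X in _ + (_ + (X + _)) = _]eq_bigr do rewrite addr0.
by rewrite big_nil; ring.
Qed.

Lemma derivn_at1_g_g_twist g k : in_comm g -> derivn_at1 (g_g (twist g)) k = 0.
Proof.
move=> cg; rewrite /g_g path_edges_twist // /derivn_at1.
rewrite !big_map !big_filter /= !(big_cons, big_cat, big_rev) /= !big_map /=.
under [X in _ + (_ + (_ + (X + _))) = _]eq_bigr do rewrite mulNr.
by rewrite sumrN big_nil; ring.
Qed.

Lemma phi_twist g k : in_comm g ->
  phi k (twist g) = if k is j.+1 then phi j g else 0.
Proof.
move=> cg; rewrite /phi [LHS]taylor1E derivn_at1_f_g_twist // -taylor1E.
by case: k => [|k]; rewrite ?taylor1_mulXsub1 // taylor1E derivn_at1_mulXsub1 mul0r.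
Qed.

Lemma psi_twist g k : in_comm g -> psi k (twist g) = 0.
Proof. by move=> cg; rewrite /psi taylor1E derivn_at1_g_g_twist // mul0r. Qed.

Lemma phi_witness n j : (j <= n.+1)%N ->
  phi j (witness n) = if j == n.+1 then -1 else 0.
Proof.
elim: n j => [|n IH] j jn.
  case: j jn => [|[|]] // _; rewrite /phi /taylor1 /f_g /= !big_cons big_nil /ff.
  - by rewrite !big_ord0 /= !mulr1 addr0 -intrD.
  - by rewrite !big_ord1 /= !(add0r, subr0, subrr, mulr1, mulr0, addr0) rmorphN1.
rewrite witnessS phi_twist; last exact: in_comm_witness.
by case: j jn => [|j] // jn; rewrite eqSS; apply: IH.
Qed.

Lemma psi_witness n j : psi j (witness n.+1) = 0.
Proof. by rewrite witnessS psi_twist //; apply: in_comm_witness. Qed.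

Lemma kernel_chainP (K : nat -> Prop) (c : nat -> rat) :
  (forall k, K k.+1 <-> K k /\ c k.+1 = 0) ->
  forall k, K k <-> K 0 /\ (forall j, (0 < j <= k)%N -> c j = 0).
Proof.
move=> KS; elim=> [|k IH]; first by split=> [K0 | []//]; split=> // -[|j].
rewrite KS IH; split=> [[[K0 ck] cSk] | [K0 ck]].
  split=> // j /andP[j0]; rewrite leq_eqVlt => /orP[/eqP-> // | jk].
  by apply: ck; rewrite j0.
split; last by apply: ck; rewrite /= leqnn.
by split=> // j /andP[j0 jk]; apply: ck; rewrite j0 (leq_trans jk).
Qed.

Lemma inGP k w : inG k w <-> in_comm w /\ (forall j, (0 < j <= k)%N -> phi j w = 0).
Proof. exact: (kernel_chainP (fun k => inG k w) (fun j => phi j w) (fun k => iff_refl _)). Qed.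

Lemma inHP k w : inH k w <-> in_comm w /\ (forall j, (0 < j <= k)%N -> psi j w = 0).
Proof. exact: (kernel_chainP (fun k => inH k w) (fun j => psi j w) (fun k => iff_refl _)). Qed.

Theorem proposition4p1 :
  forall k : nat, (1 < k)%N ->
  exists g : seq letter,
    reduced g /\ in_comm g /\
    inG k.-1 g /\ (forall j : nat, (1 <= j < k)%N -> phi j g = 0) /\
    phi k g = -1 /\
    (forall j : nat, (1 <= j)%N -> inH j g /\ psi j g = 0).
Proof.
case=> [|[|n]] // _; set g := witness n.+1.
have comm_g : in_comm g := in_comm_witness n.+1.
have phi_lt j : (j < n.+2)%N -> phi j g = 0.
  by move=> jn; rewrite phi_witness 1?ltnW // ltn_eqF.
have psi_g j : psi j g = 0 := psi_witness n j.
exists g; split; first exact: reduced_witness.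
split=> //; split; first by apply/inGP; split=> // j /andP[_ /phi_lt].
split; first by move=> j /andP[_ /phi_lt].
split; first by rewrite phi_witness // eqxx.
by move=> j _; split=> //; apply/inHP; split=> // i _; apply: psi_g.
Qed.
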